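(* Let $p\ge3$ be a prime power. Then $\mathfrak L(p,0)$ has a representation over a set of size $p^2$, and $\mathfrak L(p,1)$ has a representation over a set of size $2p^2$.
   Context: For $3\le p<\omega$, $0\le n<\omega$, $\mathfrak L(p,n)$ is the finite symmetric integral relation algebra with atoms $1',a_0,\dots,a_p,t_1,\dots,t_n$ whose composition of atoms is given, for $0\le i,j\le p$, $i\ne j$, $1\le k,l\le n$, $k\ne l$, by: $a_i;a_i=1'+a_i$; $a_i;a_j=0'\cdot\overline{a_i+a_j}$ (where $0'=\overline{1'}$); $a_i;t_k=t_1+\cdots+t_n$; $t_k;t_k=1'+a_0+\cdots+a_p$; $t_k;t_l=a_0+\cdots+a_p$. (So $\mathfrak L(p,0)$ has atoms $1',a_0,\dots,a_p$ only.) A representation over a set $D$ is an injective map $\theta$ into $\mathcal P(D\times D)$ sending $0,1,\overline{\phantom{x}},+,\cdot,1',\breve{\ },;$ to $\emptyset$, $D\times D$, complement, union, intersection, identity relation on $D$, converse and relational composition. *)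

From mathcomp Require Import all_boot.
Set Implicit Arguments. Unset Strict Implicit. Unset Printing Implicit Defensive.

(* Atoms of L(p,n):  None = 1',  Some (inl i) = a_i (i = 0..p),
   Some (inr k) = t_(k+1) (k = 0..n-1). *)
Notation Atom p n := (option ('I_p.+1 + 'I_n)%type).

Definition isA p n (x : Atom p n) : bool :=
  if x is Some (inl _) then true else false.
Definition isT p n (x : Atom p n) : bool :=
  if x is Some (inr _) then true else false.

Definition comp_atom p n (x y : Atom p n) : {set Atom p n} :=
  match x, y with
  | None, _ => [set y]
  | _, None => [set x]
  | Some (inl i), Some (inl j) =>
      if i == j then [set None; x]
      else [set z | [&& isA z, z != x & z != y]]
  | Some (inl _), Some (inr _) => [set z | isT z]
  | Some (inr _), Some (inl _) => [set z | isT z]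
  | Some (inr k), Some (inr l) =>
      if k == l then [set z | (z == None) || isA z] else [set z | isA z]
  end.

Definition Lcomp p n (X Y : {set Atom p n}) : {set Atom p n} :=
  \bigcup_(x in X) \bigcup_(y in Y) comp_atom x y.
Definition Lconv p n (X : {set Atom p n}) : {set Atom p n} := X. (* symmetric *)
Definition Lone p n : {set Atom p n} := [set None].

Definition relcomp (D : finType) (R S : {set D * D}) : {set D * D} :=
  [set u | [exists z, ((u.1, z) \in R) && ((z, u.2) \in S)]].
Definition relconv (D : finType) (R : {set D * D}) : {set D * D} :=
  [set u | (u.2, u.1) \in R].
Definition diag (D : finType) : {set D * D} := [set u | u.1 == u.2].

Definition is_representation p n (D : finType)
    (theta : {set Atom p n} -> {set D * D}) : Prop :=
  injective theta /\
  theta set0 = set0 /\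
  theta setT = setT /\
  (forall X, theta (~: X) = ~: theta X) /\
  (forall X Y, theta (X :|: Y) = theta X :|: theta Y) /\
  (forall X Y, theta (X :&: Y) = theta X :&: theta Y) /\
  theta (Lone p n) = diag D /\
  (forall X, theta (Lconv X) = relconv (theta X)) /\
  (forall X Y, theta (Lcomp X Y) = relcomp (theta X) (theta Y)).

Definition prime_power (m : nat) : Prop :=
  exists q k, prime q /\ m = q ^ k.+1.

From Pilot Require Import Defs.
From mathcomp Require Import all_boot all_algebra finfield.
From mathcomp Require Import ring.
Import GRing.Theory.

Set Implicit Arguments. Unset Strict Implicit. Unset Printing Implicit Defensive.

(* A representation of an atomic symmetric algebra over [D] is the same as a
   labelling of the pairs of points of [D] by atoms that is surjective, puts
   [1'] exactly on the diagonal, is symmetric, and is compositional: [u] and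
   [w] are joined by an atom below [x;y] iff some [z] is joined to [u] by [x]
   and to [w] by [y].

   For L(p,0), take the affine plane F^2 over the field F with p elements:
   its p+1 parallel classes of lines give the atoms [a_0..a_p], and [u,w]
   are labelled by the direction of the line through them.  Compositionality
   is elementary linear algebra with the 2x2 determinant: two steps in one
   direction stay on a line (a third scalar [t <> 0,1] splits a step, which
   is where p >= 3 is used), and steps in two independent directions reach
   exactly the points off both lines (Cramer's rule).

   For L(p,1), take two copies of any labelling of L(p,0) and label every
   pair of points in different copies by the new atom [t_1].  Finally a
   field with p elements exists since p is a prime power. *)

Definition rel_of p n (D : finType) (lab : D -> D -> Atom p n)
    (X : {set Atom p n}) : {set D * D} :=
  [set uv | lab uv.1 uv.2 \in X].

Definition compositional p n (D : finType) (lab : D -> D -> Atom p n)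
    (x y : Atom p n) : Prop :=
  forall u w,
    (lab u w \in comp_atom x y) = [exists z, (lab u z == x) && (lab z w == y)].

Definition atom_labelling p n (D : finType) (lab : D -> D -> Atom p n) : Prop :=
  [/\ forall a, exists u v, lab u v = a,
      forall u v, (lab u v == None) = (u == v),
      forall u v, lab u v = lab v u &
      forall x y, compositional lab x y].

Lemma comp_atomC p n (x y : Atom p n) : comp_atom x y = comp_atom y x.
Proof.
case: x y => [[i|k]|] [[j|l]|] //=.
  case: eqVneq => [->|_] //; apply/setP => z.
  by rewrite !inE [(_ != _) && _]andbC.
by rewrite eq_sym.
Qed.

Lemma comp_atom_refl p n (x : Atom p n) : None \in comp_atom x x.
Proof. by case: x => [[i|k]|] /=; rewrite ?eqxx !inE ?eqxx. Qed.

Lemma labelling_representation p n (D : finType) (lab : D -> D -> Atom p n) :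
  atom_labelling lab -> is_representation (rel_of lab).
Proof.
case=> lab_surj labN labS lab_comp.
split.
  move=> X Y /setP E; apply/setP=> a; have [u [v Huv]] := lab_surj a.
  by move: (E (u, v)); rewrite !inE /= Huv.
do 5![split; first by do ?move=> ?; apply/setP=> uv; rewrite !inE].
split; first by apply/setP=> [[u v]]; rewrite !inE /= labN.
split; first by move=> X; apply/setP=> [[u v]]; rewrite !inE /= labS.
move=> X Y; apply/setP=> [[u w]]; rewrite !inE /=; apply/bigcupP/existsP.
  move=> [x Hx /bigcupP [y Hy]]; rewrite lab_comp.
  by case/existsP=> z /andP[/eqP Ex /eqP Ey]; exists z; rewrite !inE /= Ex Ey Hx.
move=> [z /andP[]]; rewrite !inE /= => Hx Hy.
exists (lab u z) => //; apply/bigcupP; exists (lab z w) => //.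
by rewrite lab_comp; apply/existsP; exists z; rewrite !eqxx.
Qed.

Lemma labelling_neighbour p n (D : finType) (lab : D -> D -> Atom p n) :
  atom_labelling lab -> forall u a, exists z, lab u z = a.
Proof.
case=> _ labN _ lab_comp u a.
have Hu : lab u u = None by apply/eqP; rewrite labN.
move: (lab_comp a a u u); rewrite Hu comp_atom_refl.
by case/esym/existsP=> z /andP[/eqP Hz _]; exists z.
Qed.

Section LabellingFromAtoms.
Variables (p n : nat) (D : finType) (lab : D -> D -> Atom p n).
Hypothesis labN : forall u v, (lab u v == None) = (u == v).
Hypothesis labS : forall u v, lab u v = lab v u.

Lemma compositional_noneL (y : Atom p n) : compositional lab None y.
Proof.
move=> u w; rewrite /= inE; apply/eqP/existsP.
  by move=> <-; exists u; rewrite labN !eqxx.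
by move=> [z /andP[]]; rewrite labN => /eqP <- /eqP.
Qed.

Lemma compositional_noneR (x : Atom p n) : compositional lab x None.
Proof.
move=> u w; rewrite comp_atomC /= inE; apply/eqP/existsP.
  by move=> <-; exists w; rewrite labN !eqxx.
by move=> [z /andP[/eqP <-]]; rewrite labN => /eqP ->.
Qed.

Lemma compositional_sym (x y : Atom p n) :
  compositional lab y x -> compositional lab x y.
Proof.
move=> Hyx u w; rewrite comp_atomC labS Hyx.
apply/existsP/existsP=> -[z /andP[H1 H2]]; exists z.
  by rewrite (labS u z) (labS z w) H1 H2.
by rewrite (labS w z) (labS z u) H1 H2.
Qed.

End LabellingFromAtoms.

Definition embA p (x : Atom p 0) : Atom p 1 :=
  if x is Some (inl i) then Some (inl i) else None.

Definition tau p : Atom p 1 := Some (inr ord0).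

Lemma atom0_isA p (x : Atom p 0) : isA x = (x != None).
Proof. by case: x => [[i|[]]|]. Qed.

Lemma atom1_cases p (x : Atom p 1) : x = tau p \/ exists x0, x = embA x0.
Proof.
case: x => [[i|k]|]; last by right; exists None.
  by right; exists (Some (inl i)).
by left; rewrite /tau (ord1 k).
Qed.

Lemma embA_inj p : injective (@embA p).
Proof. by move=> [[i|[? ?]]|] [[j|[? ?]]|] //= [->]. Qed.

Lemma embA_neq_tau p (x : Atom p 0) : embA x != tau p.
Proof. by case: x => [[i|[]]|]. Qed.

Lemma comp_embA p (x y a : Atom p 0) :
  (embA a \in comp_atom (embA x) (embA y)) = (a \in comp_atom x y).
Proof.
by case: x y a => [[i|[? ?]]|] [[j|[? ?]]|] [[k|[? ?]]|] //=;
  try case: ifP => _; rewrite !inE !eqE /= ?eqE.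
Qed.

Lemma tau_notin_comp_embA p (x y : Atom p 0) :
  tau p \notin comp_atom (embA x) (embA y).
Proof.
by case: x y => [[i|[? ?]]|] [[j|[? ?]]|] //=; try case: ifP => _; rewrite !inE.
Qed.

Lemma atom1_isT p (z : Atom p 1) : Defs.isT z = (z == tau p).
Proof.
case: (atom1_cases z) => [->|[z0 ->]]; first by rewrite eqxx.
by rewrite (negbTE (embA_neq_tau z0)); case: z0 => [[?|[? ?]]|].
Qed.

Lemma comp_tau_embA p (y : Atom p 0) : comp_atom (tau p) (embA y) = [set tau p].
Proof.
by case: y => [[j|[? ?]]|] //=; apply/setP=> z; rewrite !inE atom1_isT.
Qed.

Lemma comp_tau_tau p (z : Atom p 1) :
  (z \in comp_atom (tau p) (tau p)) = (z != tau p).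
Proof.
rewrite /= inE; case: (atom1_cases z) => [->|[z0 ->]]; first by rewrite eqxx.
by rewrite embA_neq_tau; case: z0 => [[?|[? ?]]|].
Qed.

Section Doubling.
Variables (p : nat) (D : finType) (lab : D -> D -> Atom p 0).
Hypothesis Hlab : atom_labelling lab.

(* Points are pairs [(u, b)]: [u] in [D] and [b] naming the copy of [D]. *)
Definition double_lab (U W : D * bool) : Atom p 1 :=
  if U.2 == W.2 then embA (lab U.1 W.1) else tau p.

Lemma double_lab_embA x U W :
  (double_lab U W == embA x) = (U.2 == W.2) && (lab U.1 W.1 == x).
Proof.
rewrite /double_lab; case: ifP => _ /=; first exact: (inj_eq (@embA_inj p)).
by rewrite eq_sym (negbTE (embA_neq_tau x)).
Qed.

Lemma double_lab_tau U W : (double_lab U W == tau p) = (U.2 != W.2).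
Proof.
by rewrite /double_lab; case: ifP => _; rewrite ?eqxx // (negbTE (embA_neq_tau _)).
Qed.

Lemma double_labN U W : (double_lab U W == None) = (U == W).
Proof.
case: Hlab => _ labN _ _.
by case: U W => [u b] [w c]; rewrite (double_lab_embA None) labN xpair_eqE andbC.
Qed.

Lemma double_labS U W : double_lab U W = double_lab W U.
Proof. by case: Hlab => _ _ labS _; rewrite /double_lab eq_sym labS. Qed.

(* Steps along atoms of L(p,0) never leave a copy, so [x;y] is realized
   as in [lab]. *)
Lemma double_comp_embA x y : compositional double_lab (embA x) (embA y).
Proof.
case: Hlab => _ _ _ lab_comp [u b] [w c].
under eq_existsb => Z do rewrite !double_lab_embA.
have [<-|Hbc] := eqVneq b c.
  rewrite /double_lab /= eqxx comp_embA lab_comp.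
  apply/existsP/existsP => [[z Hz]|[[z d]]]; first by exists (z, b); rewrite /= eqxx.
  by rewrite /= => /andP[/andP[/eqP <- H1] /andP[_ H2]]; exists z; rewrite H1.
rewrite /double_lab /= (negbTE Hbc) (negbTE (tau_notin_comp_embA x y)).
apply/esym/existsP => -[[z d]] /=.
by case/andP=> /andP[/eqP Ebd _] /andP[/eqP Edc _]; move: Hbc; rewrite Ebd Edc eqxx.
Qed.

(* [t_1;x = t_1]: cross to the other copy, then use a neighbour along [x]. *)
Lemma double_comp_tau_embA y : compositional double_lab (tau p) (embA y).
Proof.
case: Hlab => _ _ labS _ [u b] [w c].
rewrite comp_tau_embA inE double_lab_tau /=.
under eq_existsb => Z do rewrite double_lab_tau double_lab_embA.
apply/idP/existsP => [Hbc|[[z d]] /=].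
  have [z Hz] := labelling_neighbour Hlab w y.
  by exists (z, c); rewrite /= Hbc eqxx labS Hz eqxx.
by case/andP=> Hbd /andP[/eqP Edc _]; rewrite -Edc.
Qed.

(* [t_1;t_1 = 1' + a_0 + ... + a_p]: crossing twice returns to the copy. *)
Lemma double_comp_tau_tau : compositional double_lab (tau p) (tau p).
Proof.
move=> [u b] [w c]; rewrite comp_tau_tau double_lab_tau negbK /=.
under eq_existsb => Z do rewrite !double_lab_tau.
apply/idP/existsP => [/eqP <-|[[z d]] /=]; first by exists (u, ~~ b); case: b.
by case: b c d => [] [] [].
Qed.

Lemma double_labelling : atom_labelling double_lab.
Proof.
case: (Hlab) => lab_surj labN _ _; split.
- move=> a; case: (atom1_cases a) => [->|[x ->]].
    have [u [_ _]] := lab_surj None.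
    by exists (u, true), (u, false).
  have [u [v E]] := lab_surj x.
  by exists (u, true), (v, true); rewrite /double_lab /= E.
- exact: double_labN.
- exact: double_labS.
- move=> x y; case: (atom1_cases x) (atom1_cases y) => [->|[x0 ->]] [->|[y0 ->]].
  + exact: double_comp_tau_tau.
  + exact: double_comp_tau_embA.
  + exact: (compositional_sym double_labS (double_comp_tau_embA _)).
  + exact: double_comp_embA.
Qed.
End Doubling.

Section AffinePlane.
Variable F : fieldType.
Local Open Scope ring_scope.
Implicit Types (u v w z d : F * F) (c : F).

Lemma pair_add1 u w : (u + w).1 = u.1 + w.1. Proof. by []. Qed.
Lemma pair_add2 u w : (u + w).2 = u.2 + w.2. Proof. by []. Qed.
Lemma pair_opp1 u : (- u).1 = - u.1. Proof. by []. Qed.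
Lemma pair_opp2 u : (- u).2 = - u.2. Proof. by []. Qed.
Definition pairE := (pair_add1, pair_add2, pair_opp1, pair_opp2).

Lemma pair_eq0 u : (u == 0) = (u.1 == 0) && (u.2 == 0).
Proof. by case: u => a b; rewrite xpair_eqE. Qed.

Definition scalev c v : F * F := (c * v.1, c * v.2).
Local Notation "c .* v" := (scalev c v) (at level 40).

Lemma scalev_neq0 c d : c != 0 -> d != 0 -> c .* d != 0.
Proof. by move=> Hc; rewrite !pair_eq0 /= !mulf_eq0 (negbTE Hc). Qed.

Definition det v w : F := v.1 * w.2 - v.2 * w.1.

Lemma det_vv v : det v v = 0.
Proof. by rewrite /det mulrC subrr. Qed.

Lemma det0l v : det 0 v = 0.
Proof. by rewrite /det /= !mul0r subrr. Qed.

Lemma detC v w : det v w = - det w v.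
Proof. by rewrite /det; ring. Qed.

Lemma detZl c d v : det (c .* d) v = c * det d v.
Proof. by rewrite /det /=; ring. Qed.

Lemma det_chain u z w v : det (w - u) v = det (w - z) v + det (z - u) v.
Proof. by rewrite /det !pairE; ring. Qed.

Lemma det_opp u w v : det (u - w) v = - det (w - u) v.
Proof. by rewrite /det !pairE; ring. Qed.

Lemma det_par_trans d v v' :
  d != 0 -> det d v = 0 -> det d v' = 0 -> det v v' = 0.
Proof.
rewrite pair_eq0 negb_and => /orP Hd Hv Hv'.
have E1 : d.1 * det v v' = v.1 * det d v' - v'.1 * det d v by rewrite /det; ring.
have E2 : d.2 * det v v' = v.2 * det d v' - v'.2 * det d v by rewrite /det; ring.
rewrite Hv Hv' !mulr0 subrr in E1 E2.
by case: Hd => Hd; [move: E1|move: E2] => /eqP; rewrite mulf_eq0 (negbTE Hd) => /eqP.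
Qed.

Lemma det_indep d v v' :
  d != 0 -> det d v = 0 -> det v v' != 0 -> det d v' != 0.
Proof. by move=> Hd Hv Hvv'; apply: contra_neq Hvv'; apply: det_par_trans. Qed.

Lemma det_cramer v v' d : det v v' != 0 ->
  d = (det d v' / det v v') .* v + (det v d / det v v') .* v'.
Proof.
move=> Hvv; case: d => d1 d2.
by congr pair; rewrite /det /=; field.
Qed.

Definition adj v u w : bool := (u != w) && (det (w - u) v == 0).

Lemma adjC v u w : adj v u w = adj v w u.
Proof. by rewrite /adj eq_sym det_opp oppr_eq0. Qed.

Lemma adj_shift v u d : adj v u (u + d) = (d != 0) && (det d v == 0).
Proof.
by rewrite /adj [u + d]addrC addrK eq_sym -subr_eq0 addrK.
Qed.

(* Two steps along the same direction [v] lead back to the start or along [v]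
   again; conversely both happen, using a third scalar [t] to split a step. *)
Lemma adj_comp_same v (t : F) u w : v != 0 -> t != 0 -> t != 1 ->
  (exists z, adj v u z && adj v z w) <-> (u == w) || adj v u w.
Proof.
move=> Hv Ht0 Ht1; split.
  move=> [z /andP[/andP[_ Hz1] /andP[_ Hz2]]].
  by rewrite /adj (det_chain u z w) (eqP Hz1) (eqP Hz2) addr0 eqxx andbT orbN.
case/orP=> [/eqP <-|/andP[Huw Hd]].
  by exists (u + v); rewrite [adj v (u + v) u]adjC andbb adj_shift Hv det_vv eqxx.
have Hwu : w - u != 0 by rewrite subr_eq0 eq_sym.
have Ew : w = u + t .* (w - u) + (1 - t) .* (w - u).
  by clear; case: u w => [u1 u2] [w1 w2]; congr pair; rewrite !pairE /=; ring.
exists (u + t .* (w - u)); apply/andP; split.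
  by rewrite adj_shift scalev_neq0 // detZl (eqP Hd) mulr0 eqxx.
have Ht : 1 - t != 0 by rewrite subr_eq0 eq_sym.
by rewrite [X in adj _ _ X]Ew adj_shift scalev_neq0 // detZl (eqP Hd) mulr0 eqxx.
Qed.

Lemma det_neq0_adj u w v : det (w - u) v != 0 -> (u != w) && ~~ adj v u w.
Proof.
move=> Hd; rewrite /adj (negbTE Hd) andbF andbT.
by apply: contraNneq Hd => ->; rewrite subrr det0l.
Qed.

Lemma adj_comp_distinct v v' u w : det v v' != 0 ->
  (exists z, adj v u z && adj v' z w) <->
  [&& u != w, ~~ adj v u w & ~~ adj v' u w].
Proof.
move=> Hvv'; split.
  move=> [z /andP[/andP[Huz Hz1] /andP[Hzw Hz2]]].
  have Hzu : z - u != 0 by rewrite subr_eq0 eq_sym.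
  have Hwz : w - z != 0 by rewrite subr_eq0 eq_sym.
  have Hv'v : det v' v != 0 by rewrite detC oppr_eq0.
  have Hd : det (w - u) v != 0.
    by rewrite (det_chain u z w) (eqP Hz1) addr0 (det_indep Hwz (eqP Hz2)).
  have Hd' : det (w - u) v' != 0.
    by rewrite (det_chain u z w) (eqP Hz2) add0r (det_indep Hzu (eqP Hz1)).
  by case/andP: (det_neq0_adj Hd) => -> ->; case/andP: (det_neq0_adj Hd') => _ ->.
move=> /and3P[Huw Hv Hv'].
have Hd : det (w - u) v != 0 by move: Hv; rewrite /adj Huw.
have Hd' : det (w - u) v' != 0 by move: Hv'; rewrite /adj Huw.
set a := det (w - u) v' / det v v'; set b := det v (w - u) / det v v'.
have Ha : a != 0 by rewrite mulf_neq0 ?invr_eq0.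
have Hb : b != 0 by rewrite mulf_neq0 ?invr_eq0 // detC oppr_eq0.
have Ew : w = (u + a .* v) + b .* v'.
  by rewrite -addrA -det_cramer // addrC subrK.
have Hv0 : v != 0 by apply: contraNneq Hvv' => ->; rewrite det0l.
have Hv'0 : v' != 0 by apply: contraNneq Hvv' => ->; rewrite detC det0l oppr0.
exists (u + a .* v); apply/andP; split.
  by rewrite adj_shift scalev_neq0 // detZl det_vv mulr0 eqxx.
by rewrite [X in adj _ _ X]Ew adj_shift scalev_neq0 // detZl det_vv mulr0 eqxx.
Qed.
End AffinePlane.

Section PlaneLabelling.
Variables (F : finFieldType) (p : nat) (dirv : 'I_p.+1 -> F * F) (t : F).
Local Open Scope ring_scope.
Hypothesis dirv_neq0 : forall i, dirv i != 0.
Hypothesis dirv_indep : forall i j, i != j -> det (dirv i) (dirv j) != 0.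
Hypothesis dirv_cover : forall d, exists i, det d (dirv i) == 0.
Hypotheses (t_neq0 : t != 0) (t_neq1 : t != 1).

Definition plane_lab (u w : F * F) : Atom p 0 :=
  if [pick i | adj (dirv i) u w] is Some i then Some (inl i) else None.

Lemma plane_labA i u w : (plane_lab u w == Some (inl i)) = adj (dirv i) u w.
Proof.
rewrite /plane_lab; case: pickP => [j Hj|Hnone]; last by rewrite Hnone.
apply/eqP/idP => [[<-] //|Hi]; congr (Some (inl _)); apply/eqP/contraT => Hji.
case/andP: Hj => Huw /eqP Hj; case/andP: Hi => _ /eqP Hi.
have Hwu : w - u != 0 by rewrite subr_eq0 eq_sym.
by move: (det_indep Hwu Hj (dirv_indep Hji)); rewrite Hi eqxx.
Qed.

Lemma plane_labN u w : (plane_lab u w == None) = (u == w).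
Proof.
rewrite /plane_lab; case: pickP => [j /andP[Huw _]|Hnone]; first by rewrite (negbTE Huw).
symmetry; apply: contraT => Huw.
have [i Hi] := dirv_cover (w - u).
by move: (Hnone i); rewrite /adj Huw Hi.
Qed.

Lemma plane_labS u w : plane_lab u w = plane_lab w u.
Proof. by rewrite /plane_lab (eq_pick (fun i => adjC (dirv i) u w)). Qed.

(* Compositionality for [a_i;a_j], the only case not about [1']. *)
Lemma plane_comp_inl i j : compositional plane_lab (Some (inl i)) (Some (inl j)).
Proof.
move=> u w; under eq_existsb => z do rewrite !plane_labA.
rewrite /=; have [<-|Hij] := eqVneq i j.
  rewrite !inE plane_labN plane_labA.
  have [H1 H2] := adj_comp_same u w (dirv_neq0 i) t_neq0 t_neq1.
  by apply/idP/existsP.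
rewrite !inE atom0_isA plane_labN !plane_labA.
have [H1 H2] := adj_comp_distinct u w (dirv_indep Hij).
by apply/idP/existsP.
Qed.

Lemma plane_labelling : atom_labelling plane_lab.
Proof.
split.
- move=> [[i|[? ?]]|] //; last by exists 0, 0; apply/eqP; rewrite plane_labN.
  exists 0, (dirv i); apply/eqP; rewrite plane_labA -[X in adj _ _ X]add0r adj_shift.
  by rewrite dirv_neq0 det_vv eqxx.
- exact: plane_labN.
- exact: plane_labS.
- move=> [[i|[? ?]]|] //; last exact: compositional_noneL plane_labN.
  move=> [[j|[? ?]]|] //; last by apply: compositional_noneR; apply: plane_labN.
  exact: plane_comp_inl.
Qed.
End PlaneLabelling.

Lemma third_scalar (F : finFieldType) : 2 < #|F| -> exists2 t : F, t != 0%R & t != 1%R.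
Proof.
move=> HF; have : ~~ ([set: F] \subset [set 0; 1]%R).
  apply: contraTN HF => /subset_leq_card; rewrite cardsT cards2 -leqNgt => H.
  by apply: leq_trans H _; case: (_ != _).
by case/subsetPn=> t _; rewrite !inE negb_or => /andP[]; exists t.
Qed.

Section SlopeDirections.
Variables (F : finFieldType) (p : nat).
Hypothesis cardF : #|F| = p.
Local Open Scope ring_scope.

Definition scalar_of (j : 'I_p) : F := enum_val (cast_ord (esym cardF) j).
Definition index_of (c : F) : 'I_p := cast_ord cardF (enum_rank c).

Lemma index_ofK c : scalar_of (index_of c) = c.
Proof. by rewrite /scalar_of /index_of cast_ordK enum_rankK. Qed.
Lemma scalar_of_inj : injective scalar_of.
Proof. by move=> i j /enum_val_inj /cast_ord_inj. Qed.

Definition slope_dir (i : 'I_p.+1) : F * F :=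
  if unlift ord_max i is Some j then (1, scalar_of j) else (0, 1).

Lemma slope_dir_neq0 i : slope_dir i != 0.
Proof.
by rewrite /slope_dir pair_eq0; case: unlift => [j|] /=; rewrite oner_eq0 ?andbF.
Qed.

Lemma slope_dir_indep i j : i != j -> det (slope_dir i) (slope_dir j) != 0.
Proof.
rewrite /slope_dir /det; case: unliftP => [i' ->|->]; case: unliftP => [j' ->|->] //=.
- rewrite (inj_eq lift_inj) => Hij.
  by rewrite mul1r mulr1 subr_eq0 eq_sym (inj_eq scalar_of_inj).
- by move=> _; rewrite mulr0 mulr1 subr0 oner_eq0.
- by move=> _; rewrite mul0r mulr1 sub0r oppr_eq0 oner_eq0.
- by rewrite eqxx.
Qed.

Lemma slope_dir_cover d : exists i, det d (slope_dir i) == 0.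
Proof.
case: d => d1 d2; have [E1|Hd1] := eqVneq d1 0.
  by exists ord_max; rewrite /slope_dir unlift_none /det /= E1 mulr0 mul0r subrr.
exists (lift ord_max (index_of (d2 / d1))).
by rewrite /slope_dir liftK /det /= index_ofK mulr1 mulrC divfK // subrr.
Qed.
End SlopeDirections.

Theorem lemma8 (p : nat) (Hp3 : 3 <= p) (Hpp : prime_power p) :
  (exists (D : finType) (theta : {set Atom p 0} -> {set D * D}),
      #|D| = p ^ 2 /\ is_representation theta) /\
  (exists (D : finType) (theta : {set Atom p 1} -> {set D * D}),
      #|D| = 2 * p ^ 2 /\ is_representation theta).
Proof.
have [q [k [Hq Ep]]] := Hpp.
have [F _ cardF] := pPrimePowerField Hq (ltn0Sn k); rewrite -Ep in cardF.
have [t Ht0 Ht1] : exists2 t : F, t != 0%R & t != 1%R by apply: third_scalar; rewrite cardF.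
have Hplane := plane_labelling (slope_dir_neq0 cardF) (slope_dir_indep cardF)
  (slope_dir_cover cardF) Ht0 Ht1.
split.
  exists (F * F)%type, (rel_of (plane_lab (slope_dir cardF))); split.
    by rewrite card_prod cardF mulnn.
  exact: labelling_representation.
exists ((F * F) * bool)%type, (rel_of (double_lab (plane_lab (slope_dir cardF)))).
split; first by rewrite !card_prod cardF card_bool mulnn mulnC.
exact/labelling_representation/double_labelling.
Qed.
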